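(* Let $A$ be a densely defined closed operator in a complex Hilbert space $\mathcal{H}$ such that $\operatorname{Num}(A)$ has an interior point and $\operatorname{Num}(A)\neq\mathbb{C}$. Let $\lambda\in\partial\operatorname{Num}(A)$ be a point of infinite upper curvature of $\partial\overline{\operatorname{Num}}(A)$. If $\lambda\in\operatorname{Num}(A)$, then $\lambda$ is an eigenvalue of $A$.
   Context: $\operatorname{Num}(A)=\{\langle Af,f\rangle: f\in\operatorname{D}(A),\|f\|=1\}$ is the numerical range (a convex set), $\overline{\operatorname{Num}}(A)$ its closure. Curvature conventions. Let $\Omega\subset\mathbb{C}$ be a closed convex set with nonempty interior and $\lambda\in\partial\Omega$. There is at least one supporting line of $\Omega$ through $\lambda$; $\lambda$ is called a corner point if there is more than one. If $\lambda$ is a corner point, $\Omega$ lies in a closed sector with vertex $\lambda$ and semivertical angle $<\pi/2$; take the smallest such sector and let $l_\lambda$ be the supporting line through $\lambda$ orthogonal to the axis of this sector; otherwise $l_\lambda$ is the unique supporting line. Use rectangular coordinates $(\xi,\eta)$ with origin at $\lambda$, $\xi$-axis equal to $l_\lambda$, oriented so that $\Omega\subset\{\eta\ge 0\}$. Let $D'_\varepsilon=\{(\xi,\eta):\xi^2+\eta^2\le\varepsilon^2,\ \xi\neq 0\}$. Define $\gamma_u^+(\lambda)=\lim_{\varepsilon\downarrow 0}\sup\{\eta/\xi^2:(\xi,\eta)\in\partial\Omega\cap D'_\varepsilon,\ \xi>0\}$ and $\gamma_l^+(\lambda)$ the same with $\inf$ in place of $\sup$; $\gamma_u^-(\lambda),\gamma_l^-(\lambda)$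 are defined analogously with $\xi<0$. Set $\gamma_u(\lambda)=\max(\gamma_u^+(\lambda),\gamma_u^-(\lambda))$, $\gamma_l(\lambda)=\min(\gamma_l^+(\lambda),\gamma_l^-(\lambda))$. The point $\lambda$ is of infinite upper curvature if $\gamma_u(\lambda)=\infty$, and of unilateral infinite curvature if $\gamma_l^+(\lambda)=\infty$ or $\gamma_l^-(\lambda)=\infty$. For an operator $A$, these notions at $\lambda\in\partial\operatorname{Num}(A)$ refer to $\Omega=\overline{\operatorname{Num}}(A)$. *)

From Stdlib Require Import Reals Lra.
Open Scope R_scope.

Record Cx := mkC { Re : R; Im : R }.
Definition Cadd (z w : Cx) : Cx := mkC (Re z + Re w) (Im z + Im w).
Definition Copp (z : Cx) : Cx := mkC (- Re z) (- Im z).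
Definition Csub (z w : Cx) : Cx := Cadd z (Copp w).
Definition Cmul (z w : Cx) : Cx :=
  mkC (Re z * Re w - Im z * Im w) (Re z * Im w + Im z * Re w).
Definition Cconj (z : Cx) : Cx := mkC (Re z) (- Im z).
Definition C0 : Cx := mkC 0 0.
Definition C1 : Cx := mkC 1 0.
Definition Cabs (z : Cx) : R := sqrt (Re z * Re z + Im z * Im z).

Record CHilbert := {
  hs :> Type;
  hadd : hs -> hs -> hs;
  hzero : hs;
  hopp : hs -> hs;
  hscal : Cx -> hs -> hs;
  hinner : hs -> hs -> Cx;            (* linear in the first argument *)
  haddA : forall x y z, hadd x (hadd y z) = hadd (hadd x y) z;
  haddC : forall x y, hadd x y = hadd y x;
  hadd0 : forall x, hadd x hzero = x;
  haddN : forall x, hadd x (hopp x) = hzero;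
  hscalA : forall a b x, hscal a (hscal b x) = hscal (Cmul a b) x;
  hscal1 : forall x, hscal C1 x = x;
  hscalDr : forall a x y, hscal a (hadd x y) = hadd (hscal a x) (hscal a y);
  hscalDl : forall a b x, hscal (Cadd a b) x = hadd (hscal a x) (hscal b x);
  hinnerDl : forall x y z, hinner (hadd x y) z = Cadd (hinner x z) (hinner y z);
  hinnerZl : forall a x y, hinner (hscal a x) y = Cmul a (hinner x y);
  hinner_conj : forall x y, hinner y x = Cconj (hinner x y);
  hinner_pos : forall x, 0 <= Re (hinner x x);
  hinner_def : forall x, hinner x x = C0 -> x = hzero;
  hcomplete : forall u : nat -> hs,
    (forall eps, 0 < eps -> exists N, forall n m, (N <= n)%nat -> (N <= m)%nat ->
        sqrt (Re (hinner (hadd (u n) (hopp (u m))) (hadd (u n) (hopp (u m))))) < eps) ->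
    exists x, forall eps, 0 < eps -> exists N, forall n, (N <= n)%nat ->
        sqrt (Re (hinner (hadd (u n) (hopp x)) (hadd (u n) (hopp x)))) < eps
}.

Arguments hadd {_}. Arguments hzero {_}. Arguments hopp {_}.
Arguments hscal {_}. Arguments hinner {_}.

Definition hnorm {H : CHilbert} (x : H) : R := sqrt (Re (hinner x x)).
Definition hsub {H : CHilbert} (x y : H) : H := hadd x (hopp y).

Definition hconverges {H : CHilbert} (u : nat -> H) (x : H) : Prop :=
  forall eps, 0 < eps -> exists N, forall n, (N <= n)%nat -> hnorm (hsub (u n) x) < eps.

(* ---------- (Unbounded) operators: domain D, action A (only meaningful on D) ---------- *)
Definition is_subspace {H : CHilbert} (D : H -> Prop) : Prop :=
  D hzero /\ (forall x y, D x -> D y -> D (hadd x y)) /\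
  (forall a x, D x -> D (hscal a x)).

Definition linear_on {H : CHilbert} (D : H -> Prop) (A : H -> H) : Prop :=
  (forall x y, D x -> D y -> A (hadd x y) = hadd (A x) (A y)) /\
  (forall a x, D x -> A (hscal a x) = hscal a (A x)).

Definition hdense {H : CHilbert} (D : H -> Prop) : Prop :=
  forall x eps, 0 < eps -> exists y, D y /\ hnorm (hsub x y) < eps.

Definition closed_op {H : CHilbert} (D : H -> Prop) (A : H -> H) : Prop :=
  forall (u : nat -> H) x y, (forall n, D (u n)) ->
    hconverges u x -> hconverges (fun n => A (u n)) y -> D x /\ A x = y.

Definition densely_defined_closed_operator {H : CHilbert} (D : H -> Prop) (A : H -> H) : Prop :=
  is_subspace D /\ linear_on D A /\ hdense D /\ closed_op D A.

Definition eigenvalue {H : CHilbert} (D : H -> Prop) (A : H -> H) (l : Cx) : Prop :=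
  exists f, D f /\ f <> hzero /\ A f = hscal l f.

Definition Num {H : CHilbert} (D : H -> Prop) (A : H -> H) (z : Cx) : Prop :=
  exists f, D f /\ hnorm f = 1 /\ hinner (A f) f = z.

Definition Ccl (S : Cx -> Prop) (z : Cx) : Prop :=
  forall eps, 0 < eps -> exists w, S w /\ Cabs (Csub w z) < eps.
Definition Cinterior (S : Cx -> Prop) (z : Cx) : Prop :=
  exists eps, 0 < eps /\ forall w, Cabs (Csub w z) < eps -> S w.
Definition Cboundary (S : Cx -> Prop) (z : Cx) : Prop := Ccl S z /\ ~ Cinterior S z.

(* The line through l with unit normal n supports Om, Om lying on the side n points to. *)
Definition supp_normal (Om : Cx -> Prop) (l n : Cx) : Prop :=
  Cabs n = 1 /\ forall w, Om w -> 0 <= Re (Cmul (Csub w l) (Cconj n)).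

(* The lines with unit normals n1, n2 through l coincide iff n1 = n2 or n1 = -n2.
   l is a corner point iff there are two distinct supporting lines through l. *)
Definition corner_point (Om : Cx -> Prop) (l : Cx) : Prop :=
  exists n1 n2, supp_normal Om l n1 /\ supp_normal Om l n2 /\ n1 <> n2 /\ n1 <> Copp n2.

(* Closed sector with vertex l, unit axis direction u and semivertical angle th. *)
Definition sector (l u : Cx) (th : R) (w : Cx) : Prop :=
  Cabs (Csub w l) * cos th <= Re (Cmul (Csub w l) (Cconj u)).

(* u is the unit vector along the eta-axis (orthogonal to l_lambda, pointing into Om). *)
Definition eta_direction (Om : Cx -> Prop) (l u : Cx) : Prop :=
  Cabs u = 1 /\
  (corner_point Om l ->
     exists th, 0 <= th < PI / 2 /\ (forall w, Om w -> sector l u th w) /\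
       forall u' th', Cabs u' = 1 -> 0 <= th' < PI / 2 ->
         (forall w, Om w -> sector l u' th' w) ->
         forall w, sector l u th w -> sector l u' th' w) /\
  (~ corner_point Om l -> supp_normal Om l u).

(* Coordinates of w: w - l = (eta + i xi) * u, i.e. eta along u, xi along l_lambda. *)
Definition eta_c (l u w : Cx) : R := Re (Cmul (Csub w l) (Cconj u)).
Definition xi_c (l u w : Cx) : R := Im (Cmul (Csub w l) (Cconj u)).

(* gamma_u^+(l) = infinity  (the sup over D'_eps with xi>0 is +infinity for every eps > 0,
   since these sups decrease as eps decreases). *)
Definition gamma_u_plus_infinite (Om : Cx -> Prop) (l u : Cx) : Prop :=
  forall M eps, 0 < eps -> exists w, Cboundary Om w /\
    0 < xi_c l u w /\ (xi_c l u w)^2 + (eta_c l u w)^2 <= eps^2 /\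
    M < eta_c l u w / (xi_c l u w)^2.

Definition gamma_u_minus_infinite (Om : Cx -> Prop) (l u : Cx) : Prop :=
  forall M eps, 0 < eps -> exists w, Cboundary Om w /\
    xi_c l u w < 0 /\ (xi_c l u w)^2 + (eta_c l u w)^2 <= eps^2 /\
    M < eta_c l u w / (xi_c l u w)^2.

Definition infinite_upper_curvature (Om : Cx -> Prop) (l : Cx) : Prop :=
  exists u, eta_direction Om l u /\
    (gamma_u_plus_infinite Om l u \/ gamma_u_minus_infinite Om l u).

(* Write l = <A f0, f0> with ||f0|| = 1 and suppose A f0 <> l f0. Density of D(A) gives g in
   D(A) orthogonal to f0 with <A f0, g> <> 0. In coordinates centred at l (xi along the line
   l_lambda, eta along its inner normal) the numerical values of f0 + t s g (t real, |s| = 1)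
   trace the curves (xi, eta) = ((a t + m t^2) / (1 + G t^2), (b t + k t^2) / (1 + G t^2)).
   Since eta >= 0 on Num(A), b = 0, and <A f0, g> <> 0 lets us pick s with a <> 0. By convexity
   of Num(A) (Toeplitz-Hausdorff) the triangle spanned by the curve points at t and -t and by an
   interior point lies in Num(A); letting t shrink like |xi| + eta shows that Num(A) contains a
   neighbourhood of every point near l above a parabola eta > M xi^2. Hence boundary points
   near l satisfy eta <= M xi^2: the upper curvature at l is finite. *)

From Stdlib Require Import Reals Lra Psatz Classical.
Open Scope R_scope.

(** * Complex numbers and Hilbert spaces *)

Lemma Cx_ext (z w : Cx) : Re z = Re w -> Im z = Im w -> z = w.
Proof. destruct z, w; simpl; intros; subst; reflexivity. Qed.

Ltac Cx_ring := apply Cx_ext; simpl; ring.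

Lemma Cnorm2_gt0 (w : Cx) : w <> C0 -> 0 < Re w * Re w + Im w * Im w.
Proof.
  destruct w as [a b]; simpl; intro Hw.
  destruct (Req_dec a 0), (Req_dec b 0); subst; try nra.
  now exfalso; apply Hw.
Qed.

Lemma Cabs_lt (z : Cx) (e : R) : 0 < e -> Re z * Re z + Im z * Im z < e * e -> Cabs z < e.
Proof.
  intros He Hz. unfold Cabs. rewrite <- (sqrt_square e) by lra.
  apply sqrt_lt_1_alt. nra.
Qed.

Lemma Cabs_lt_inv (z : Cx) (e : R) : Cabs z < e -> Re z * Re z + Im z * Im z < e * e.
Proof.
  unfold Cabs. intro Hz. assert (Hn : 0 <= Re z * Re z + Im z * Im z) by nra.
  pose proof (sqrt_sqrt _ Hn). pose proof (sqrt_pos (Re z * Re z + Im z * Im z)). nra.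
Qed.

Lemma Cabs_eq1 (u : Cx) : Cabs u = 1 -> Re u * Re u + Im u * Im u = 1.
Proof.
  unfold Cabs. intro Hu. assert (Hn : 0 <= Re u * Re u + Im u * Im u) by nra.
  rewrite <- (sqrt_sqrt _ Hn), Hu. ring.
Qed.

Lemma Cmul_conj_eq_real (v c : Cx) (p : R) : c <> C0 ->
  Cmul v (Cconj c) = mkC (p * (Re c * Re c + Im c * Im c)) 0 -> v = Cmul (mkC p 0) c.
Proof.
  intros Hc E. pose proof (Cnorm2_gt0 c Hc) as Hcc.
  pose proof (f_equal Re E) as Er. pose proof (f_equal Im E) as Ei. simpl in Er, Ei.
  destruct v as [vr vi], c as [cr ci]; simpl in *.
  apply Cx_ext; simpl; apply (Rmult_eq_reg_r (cr * cr + ci * ci)); try lra.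
  - transitivity (cr * (vr * cr - vi * - ci) - ci * (vr * - ci + vi * cr)); [ring|].
    rewrite Er, Ei. ring.
  - transitivity (ci * (vr * cr - vi * - ci) + cr * (vr * - ci + vi * cr)); [ring|].
    rewrite Er, Ei. ring.
Qed.

Lemma Cmul_conj_unit (v u : Cx) : Re u * Re u + Im u * Im u = 1 -> Cmul (Cmul v (Cconj u)) u = v.
Proof.
  intro Hu. apply Cx_ext; simpl.
  - transitivity (Re v * (Re u * Re u + Im u * Im u)); [ring | rewrite Hu; ring].
  - transitivity (Im v * (Re u * Re u + Im u * Im u)); [ring | rewrite Hu; ring].
Qed.

Lemma exists_real_phase (p : Cx) : exists w, w <> C0 /\ Im (Cmul (Cconj w) p) = 0.
Proof.
  destruct (classic (p = C0)) as [-> | Hp].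
  - exists C1. split; [intro Z; injection Z; lra | simpl; ring].
  - exists p. split; [exact Hp | simpl; ring].
Qed.

Lemma Ccl_of (S : Cx -> Prop) (z : Cx) : S z -> Ccl S z.
Proof. intros Hz e He. exists z. split; auto. apply Cabs_lt; simpl; nra. Qed.

Section HilbertSpace.
Variable H : CHilbert.

Lemma inner0l (y : H) : hinner hzero y = C0.
Proof.
  pose proof (hinnerDl H hzero hzero y) as E. rewrite hadd0 in E.
  apply Cx_ext; [apply (f_equal Re) in E | apply (f_equal Im) in E]; simpl in *; lra.
Qed.

Lemma innerDr (x y z : H) : hinner x (hadd y z) = Cadd (hinner x y) (hinner x z).
Proof. rewrite (hinner_conj H (hadd y z)), hinnerDl, !(hinner_conj H _ x). Cx_ring. Qed.

Lemma innerZr (a : Cx) (x y : H) : hinner x (hscal a y) = Cmul (Cconj a) (hinner x y).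
Proof. rewrite (hinner_conj H (hscal a y)), hinnerZl, (hinner_conj H y x). Cx_ring. Qed.

Lemma innerNl (x y : H) : hinner (hopp x) y = Copp (hinner x y).
Proof.
  pose proof (hinnerDl H x (hopp x) y) as E. rewrite haddN, inner0l in E.
  apply Cx_ext; [apply (f_equal Re) in E | apply (f_equal Im) in E]; simpl in *; lra.
Qed.

Lemma innerNr (x y : H) : hinner y (hopp x) = Copp (hinner y x).
Proof. rewrite (hinner_conj H (hopp x)), innerNl, (hinner_conj H x y). Cx_ring. Qed.

Lemma inner_self_real (x : H) : Im (hinner x x) = 0.
Proof. pose proof (f_equal Im (hinner_conj H x x)). simpl in *. lra. Qed.

Lemma inner_self_gt0 (x : H) : x <> hzero -> 0 < Re (hinner x x).
Proof.
  intro Hx. destruct (Rle_lt_or_eq_dec _ _ (hinner_pos H x)) as [|E]; auto.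
  exfalso. apply Hx, hinner_def. apply Cx_ext; simpl; auto using inner_self_real.
Qed.

Lemma inner_self_unit (f : H) : hnorm f = 1 -> hinner f f = C1.
Proof.
  unfold hnorm. intro E. apply Cx_ext; simpl; [|apply inner_self_real].
  rewrite <- (sqrt_sqrt (Re (hinner f f))) by apply hinner_pos. rewrite E. ring.
Qed.

Lemma hsub_eq0 (x y : H) : hadd x (hopp y) = hzero -> x = y.
Proof.
  intro E. transitivity (hadd (hadd x (hopp y)) y).
  - now rewrite <- haddA, (haddC H (hopp y)), haddN, hadd0.
  - now rewrite E, haddC, hadd0.
Qed.

Lemma hadd_idem (x : H) : hadd x x = x -> x = hzero.
Proof.
  intro E. transitivity (hadd (hadd x x) (hopp x)).
  - now rewrite <- haddA, haddN, hadd0.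
  - now rewrite E, haddN.
Qed.

Lemma inner_comb (a b : Cx) (x1 x2 y1 y2 : H) :
  hinner (hadd (hscal a x1) (hscal b x2)) (hadd (hscal a y1) (hscal b y2)) =
  Cadd (Cadd (Cmul (Cmul a (Cconj a)) (hinner x1 y1)) (Cmul (Cmul a (Cconj b)) (hinner x1 y2)))
       (Cadd (Cmul (Cmul b (Cconj a)) (hinner x2 y1)) (Cmul (Cmul b (Cconj b)) (hinner x2 y2))).
Proof. rewrite !hinnerDl, !innerDr, !hinnerZl, !innerZr. Cx_ring. Qed.

Lemma dense_not_orthogonal (D : H -> Prop) (v : H) :
  hdense D -> v <> hzero -> exists y, D y /\ hinner v y <> C0.
Proof.
  intros Hd Hv. pose proof (inner_self_gt0 v Hv) as Hvp.
  destruct (Hd v (hnorm v)) as [y [Dy Hy]]; [now apply sqrt_lt_R0|].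
  exists y. split; auto. intro Z.
  assert (E : Re (hinner (hsub v y) (hsub v y)) = Re (hinner v v) + Re (hinner y y)).
  { unfold hsub. rewrite hinnerDl, !innerDr, !innerNl, !innerNr, (hinner_conj H v y), Z.
    simpl. ring. }
  unfold hnorm in Hy. rewrite E in Hy. pose proof (hinner_pos H y).
  assert (sqrt (Re (hinner v v)) <= sqrt (Re (hinner v v) + Re (hinner y y)))
    by (apply sqrt_le_1_alt; lra).
  lra.
Qed.

End HilbertSpace.

(** * Convex sets in the plane *)

Definition convex2 (S : R -> R -> Prop) : Prop :=
  forall x1 y1 x2 y2 s, S x1 y1 -> S x2 y2 -> 0 <= s <= 1 ->
    S (x1 + s * (x2 - x1)) (y1 + s * (y2 - y1)).

(* Twice the signed area of the triangle [(a1,a2), (b1,b2), (p1,p2)]. *)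
Definition orient (a1 a2 b1 b2 p1 p2 : R) : R := (b1 - a1) * (p2 - a2) - (b2 - a2) * (p1 - a1).

Lemma convex2_triangle (S : R -> R -> Prop) (a1 a2 b1 b2 c1 c2 p1 p2 : R) :
  convex2 S -> S a1 a2 -> S b1 b2 -> S c1 c2 ->
  0 < orient b1 b2 c1 c2 p1 p2 -> 0 < orient c1 c2 a1 a2 p1 p2 -> 0 < orient a1 a2 b1 b2 p1 p2 ->
  S p1 p2.
Proof.
  intros conv Sa Sb Sc Ha Hb Hc.
  set (wa := orient b1 b2 c1 c2 p1 p2) in *. set (wb := orient c1 c2 a1 a2 p1 p2) in *.
  set (wc := orient a1 a2 b1 b2 p1 p2) in *.
  (* barycentric coordinates: [wa a + wb b + wc c = (wa + wb + wc) p] *)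
  set (s1 := wc / (wa + wc)). set (s2 := wb / (wa + wb + wc)).
  assert (Hs1 : 0 <= s1 <= 1).
  { unfold s1. split; [apply Rle_mult_inv_pos; lra |].
    apply Rmult_le_reg_r with (wa + wc); [lra |]. unfold Rdiv. rewrite Rmult_assoc, Rinv_l; lra. }
  assert (Hs2 : 0 <= s2 <= 1).
  { unfold s2. split; [apply Rle_mult_inv_pos; lra |].
    apply Rmult_le_reg_r with (wa + wb + wc); [lra |]. unfold Rdiv.
    rewrite Rmult_assoc, Rinv_l; lra. }
  pose proof (conv _ _ _ _ s2 (conv _ _ _ _ s1 Sa Sc Hs1) Sb Hs2) as F.
  replace p1 with (a1 + s1 * (c1 - a1) + s2 * (b1 - (a1 + s1 * (c1 - a1)))).
  replace p2 with (a2 + s1 * (c2 - a2) + s2 * (b2 - (a2 + s1 * (c2 - a2)))).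
  - exact F.
  - unfold s1, s2, wa, wb, wc, orient in *. field. lra.
  - unfold s1, s2, wa, wb, wc, orient in *. field. lra.
Qed.

Lemma affine_pos_near (s a b : R) : 0 < s -> exists r, 0 < r /\
  forall dx dy, dx * dx + dy * dy < r * r -> 0 < s + a * dx + b * dy.
Proof.
  intro Hs. pose proof (Rabs_pos a). pose proof (Rabs_pos b).
  set (r := s / (Rabs a + Rabs b + 1)).
  assert (Hr : 0 < r) by (apply Rdiv_lt_0_compat; lra).
  exists r. split; [exact Hr |]. intros dx dy Hd.
  assert (Hdx : Rabs dx < r).
  { rewrite <- (Rabs_pos_eq r) by lra. apply Rsqr_lt_abs_0. unfold Rsqr. nra. }
  assert (Hdy : Rabs dy < r).
  { rewrite <- (Rabs_pos_eq r) by lra. apply Rsqr_lt_abs_0. unfold Rsqr. nra. }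
  assert (Hsum : (Rabs a + Rabs b + 1) * r = s) by (unfold r; field; lra).
  pose proof (Rle_abs (- (a * dx))). pose proof (Rle_abs (- (b * dy))).
  rewrite Rabs_Ropp, Rabs_mult in *.
  assert (Rabs a * Rabs dx <= Rabs a * r) by (apply Rmult_le_compat_l; lra).
  assert (Rabs b * Rabs dy <= Rabs b * r) by (apply Rmult_le_compat_l; lra).
  nra.
Qed.

Lemma convex2_triangle_nbhs (S : R -> R -> Prop) (a1 a2 b1 b2 c1 c2 p1 p2 : R) :
  convex2 S -> S a1 a2 -> S b1 b2 -> S c1 c2 ->
  0 < orient b1 b2 c1 c2 p1 p2 -> 0 < orient c1 c2 a1 a2 p1 p2 -> 0 < orient a1 a2 b1 b2 p1 p2 ->
  exists r, 0 < r /\ forall q1 q2, (q1 - p1) * (q1 - p1) + (q2 - p2) * (q2 - p2) < r * r ->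
    S q1 q2.
Proof.
  intros conv Sa Sb Sc Ha Hb Hc.
  destruct (affine_pos_near _ (- (c2 - b2)) (c1 - b1) Ha) as [ra [Hra Ra]].
  destruct (affine_pos_near _ (- (a2 - c2)) (a1 - c1) Hb) as [rb [Hrb Rb]].
  destruct (affine_pos_near _ (- (b2 - a2)) (b1 - a1) Hc) as [rc [Hrc Rc]].
  set (r := Rmin ra (Rmin rb rc)).
  assert (Hr : 0 < r) by (unfold r; repeat apply Rmin_glb_lt; auto).
  assert (r <= ra) by apply Rmin_l.
  assert (r <= rb) by (eapply Rle_trans; [apply Rmin_r | apply Rmin_l]).
  assert (r <= rc) by (eapply Rle_trans; [apply Rmin_r | apply Rmin_r]).
  exists r. split; [exact Hr |]. intros q1 q2 Hq.
  apply (convex2_triangle S a1 a2 b1 b2 c1 c2); auto.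
  - replace (orient b1 b2 c1 c2 q1 q2) with (orient b1 b2 c1 c2 p1 p2 + - (c2 - b2) * (q1 - p1)
      + (c1 - b1) * (q2 - p2)) by (unfold orient; ring). apply Ra. nra.
  - replace (orient c1 c2 a1 a2 q1 q2) with (orient c1 c2 a1 a2 p1 p2 + - (a2 - c2) * (q1 - p1)
      + (a1 - c1) * (q2 - p2)) by (unfold orient; ring). apply Rb. nra.
  - replace (orient a1 a2 b1 b2 q1 q2) with (orient a1 a2 b1 b2 p1 p2 + - (b2 - a2) * (q1 - p1)
      + (b1 - a1) * (q2 - p2)) by (unfold orient; ring). apply Rc. nra.
Qed.

Lemma IVT_interior (phi : R -> R) : continuity phi -> phi 0 < 0 -> 0 < phi 1 ->
  exists x, 0 < x < 1 /\ phi x = 0.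
Proof.
  intros Hc H0 H1. destruct (IVT_cor phi 0 1 Hc) as [x [Hx Hphi]]; [lra | nra |].
  exists x. split; [| exact Hphi].
  split; apply Rnot_le_lt; intro; [assert (x = 0) as -> | assert (x = 1) as ->]; lra.
Qed.

Definition pencil (a b G t : R) : R := (t * a + t * t * b) / (1 + t * t * G).

Lemma pencil_opp (a b G t : R) : pencil a b G (- t) = pencil (- a) b G t.
Proof. unfold pencil. replace (- t * - t) with (t * t) by ring. f_equal. ring. Qed.

Lemma pencil_bounds (l0 m k G t : R) : 0 < l0 -> 0 <= G -> Rabs t <= 1 ->
  Rabs t * (Rabs m + 1) <= l0 / 2 ->
  l0 / (2 * (1 + G)) * (t * t) <= t * pencil l0 m G t /\
  Rabs (pencil l0 m G t) <= (l0 + Rabs m) * Rabs t /\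
  Rabs (pencil 0 k G t) <= (Rabs k + 1) * (t * t).
Proof.
  intros Hl HG Ht1 Htm. pose proof (Rabs_pos t). pose proof (Rabs_pos m). pose proof (Rabs_pos k).
  assert (Htt : t * t = Rabs t * Rabs t) by (rewrite <- Rabs_mult, Rabs_pos_eq; nra).
  set (Dn := 1 + t * t * G).
  assert (HD1 : 1 <= Dn) by (unfold Dn; nra).
  assert (Ht2 : t * t <= 1) by (rewrite Htt; nra).
  assert (HD2 : Dn <= 1 + G).
  { unfold Dn. assert (t * t * G <= 1 * G) by (apply Rmult_le_compat_r; lra). lra. }
  assert (Ex : pencil l0 m G t * Dn = t * l0 + t * t * m) by (unfold pencil; fold Dn; field; lra).
  assert (Ey : pencil 0 k G t * Dn = t * t * k) by (unfold pencil; fold Dn; field; lra).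
  set (x := pencil l0 m G t) in *. set (y := pencil 0 k G t) in *.
  assert (Hm : - (t * t * t * m) <= t * t * (l0 / 2)).
  { eapply Rle_trans; [apply Rle_abs |]. rewrite Rabs_Ropp, !Rabs_mult, Htt.
    rewrite (Rmult_assoc (Rabs t * Rabs t)). apply Rmult_le_compat_l; [nra |]. nra. }
  split; [| split].
  - assert (Hlow : t * t * l0 / 2 <= t * x * Dn).
    { replace (t * x * Dn) with (t * t * l0 + t * t * t * m)
        by (rewrite (Rmult_assoc t x Dn), Ex; ring).
      lra. }
    apply Rmult_le_reg_r with (2 * (1 + G)); [lra |].
    replace (l0 / (2 * (1 + G)) * (t * t) * (2 * (1 + G))) with (t * t * l0) by (field; lra).
    assert (0 <= t * t * l0) by (apply Rmult_le_pos; nra).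
    assert (0 <= t * x).
    { destruct (Rlt_or_le (t * x) 0) as [Hn |]; [| auto].
      assert (0 < - (t * x) * Dn) by (apply Rmult_lt_0_compat; lra). lra. }
    assert (t * x * Dn <= t * x * (1 + G)) by (apply Rmult_le_compat_l; lra). lra.
  - assert (Rabs x * Dn <= (l0 + Rabs m) * Rabs t).
    { rewrite <- (Rabs_pos_eq Dn) by lra. rewrite <- Rabs_mult, Ex.
      eapply Rle_trans; [apply Rabs_triang |]. rewrite !Rabs_mult, (Rabs_pos_eq l0) by lra.
      rewrite <- Htt.
      assert (t * t * Rabs m <= Rabs t * Rabs m)
        by (apply Rmult_le_compat_r; [lra | rewrite Htt; nra]).
      lra. }
    pose proof (Rabs_pos x). assert (Rabs x * 1 <= Rabs x * Dn) by (apply Rmult_le_compat_l; lra).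
    lra.
  - assert (Rabs y * Dn <= (Rabs k + 1) * (t * t)).
    { rewrite <- (Rabs_pos_eq Dn) by lra. rewrite <- Rabs_mult, Ey, !Rabs_mult, <- Htt.
      assert (0 <= t * t) by nra. nra. }
    pose proof (Rabs_pos y). assert (Rabs y * 1 <= Rabs y * Dn) by (apply Rmult_le_compat_l; lra).
    lra.
Qed.

Lemma pencil_pm_bounds (l0 m k G t : R) : 0 < l0 -> 0 <= G -> 0 < t <= 1 ->
  t * (Rabs m + 1) <= l0 / 2 ->
  l0 / (2 * (1 + G)) * t <= pencil l0 m G t /\
  pencil l0 m G (- t) <= - (l0 / (2 * (1 + G)) * t) /\
  Rabs (pencil l0 m G t) <= (l0 + Rabs m) * t /\
  Rabs (pencil l0 m G (- t)) <= (l0 + Rabs m) * t /\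
  Rabs (pencil 0 k G t) <= (Rabs k + 1) * (t * t).
Proof.
  intros Hl0 HG [Ht Ht1] Htm.
  assert (Hat : Rabs t = t) by (apply Rabs_pos_eq; lra).
  assert (Hamt : Rabs (- t) = t) by (rewrite Rabs_Ropp; exact Hat).
  destruct (pencil_bounds l0 m k G t Hl0 HG) as [Bx1 [Bx1' By1]]; rewrite ?Hat; [lra | lra |].
  destruct (pencil_bounds l0 m k G (- t) Hl0 HG) as [Bx2 [Bx2' _]]; rewrite ?Hamt; [lra | lra |].
  rewrite Hat in Bx1'. rewrite Hamt in Bx2'.
  repeat split; auto; apply Rmult_le_reg_l with t; nra.
Qed.

Lemma sub_prod_gt0 (u v w z U V W Z : R) : 0 <= U <= u -> 0 <= V <= v ->
  Rabs w <= W -> Rabs z <= Z -> W * Z < U * V -> 0 < u * v - w * z.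
Proof.
  intros Hu Hv Hw Hz Hlt.
  assert (U * V <= u * v) by (apply Rmult_le_compat; lra).
  assert (w * z <= W * Z).
  { eapply Rle_trans; [apply Rle_abs |]. rewrite Rabs_mult.
    apply Rmult_le_compat; auto using Rabs_pos. }
  lra.
Qed.

Lemma pencil_triangle_orient_pos (l0 m k G X Y t x y : R) :
  0 < l0 -> 0 <= G -> 0 < y <= Y -> 0 < t <= 1 -> t * (Rabs m + 1) <= l0 / 2 ->
  (Rabs k + 1) * (t * t) < y / 2 ->
  (4 * (Rabs X + (l0 + Rabs m)) / Y + 2) * (Rabs x + y) <= l0 / (2 * (1 + G)) * t ->
  0 < orient X Y (pencil l0 m G (- t)) (pencil 0 k G t) x y /\
  0 < orient (pencil l0 m G (- t)) (pencil 0 k G t) (pencil l0 m G t) (pencil 0 k G t) x y /\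
  0 < orient (pencil l0 m G t) (pencil 0 k G t) X Y x y.
Proof.
  intros Hl0 HG [Hy HyY] [Ht Ht1] Htm HKt Hside.
  pose proof (Rabs_pos m). pose proof (Rabs_pos X). pose proof (Rabs_pos x).
  set (L0 := l0 / (2 * (1 + G))) in *. set (L1 := l0 + Rabs m) in *.
  set (E := Rabs X + L1) in *. set (rho := Rabs x + y) in *.
  assert (Hrho : rho = Rabs x + y) by reflexivity.
  assert (HE : 0 < 4 * E / Y) by (apply Rdiv_lt_0_compat; unfold E, L1; lra).
  destruct (pencil_pm_bounds l0 m k G t Hl0 HG (conj Ht Ht1) Htm) as [Hx1 [Hx2 [Bx1 [Bx2 By1]]]].
  fold L0 L1 in Hx1, Hx2, Bx1, Bx2.
  set (x1 := pencil l0 m G t) in *. set (x2 := pencil l0 m G (- t)) in *.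
  set (y1 := pencil 0 k G t) in *.
  pose proof (Rle_abs y1). pose proof (Rle_abs (- y1)). rewrite Rabs_Ropp in *.
  pose proof (Rle_abs x). pose proof (Rle_abs (- x)). rewrite Rabs_Ropp in *.
  assert (HYy : Y / 2 <= Y - y1) by lra.
  assert (Hyy : 0 < y - y1) by lra.
  assert (Hdy : Rabs (y - y1) <= 2 * rho) by (rewrite Rabs_pos_eq; lra).
  assert (HV : 0 <= L0 * t - rho) by nra.
  assert (Hdom : E * (2 * rho) < Y / 2 * (L0 * t - rho)).
  { assert (Y / 2 * ((4 * E / Y + 1) * rho) <= Y / 2 * (L0 * t - rho))
      by (apply Rmult_le_compat_l; lra).
    replace (Y / 2 * ((4 * E / Y + 1) * rho)) with (2 * E * rho + Y / 2 * rho) in * by (field; lra).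
    assert (0 < Y / 2 * rho) by (apply Rmult_lt_0_compat; lra). lra. }
  assert (HL1 : L1 * t <= L1) by (unfold L1; nra).
  assert (HXx1 : Rabs (x1 - X) <= E).
  { unfold Rminus. eapply Rle_trans; [apply Rabs_triang |]. rewrite Rabs_Ropp. unfold E. lra. }
  assert (HXx2 : Rabs (X - x2) <= E).
  { unfold Rminus. eapply Rle_trans; [apply Rabs_triang |]. rewrite Rabs_Ropp. unfold E. lra. }
  split; [| split].
  - replace (orient X Y x2 y1 x y) with ((Y - y1) * (x - x2) - (X - x2) * (y - y1))
      by (unfold orient; ring).
    apply (sub_prod_gt0 _ _ _ _ (Y / 2) (L0 * t - rho) E (2 * rho)); repeat split; lra.
  - replace (orient x2 y1 x1 y1 x y) with ((x1 - x2) * (y - y1)) by (unfold orient; ring).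
    apply Rmult_lt_0_compat; nra.
  - replace (orient x1 y1 X Y x y) with ((Y - y1) * (x1 - x) - (x1 - X) * (y - y1))
      by (unfold orient; ring).
    apply (sub_prod_gt0 _ _ _ _ (Y / 2) (L0 * t - rho) E (2 * rho)); repeat split; lra.
Qed.

Lemma parabola_sq_bound (c x y : R) : 0 < c -> 8 * c * (x * x) < y -> 0 < y <= 1 / (8 * c) ->
  c * ((Rabs x + y) * (Rabs x + y)) < y / 2.
Proof.
  intros Hc Hx [Hy Hyc].
  assert (Hax : Rabs x * Rabs x = x * x) by (rewrite <- Rabs_mult, Rabs_pos_eq; nra).
  assert ((Rabs x + y) * (Rabs x + y) <= 2 * (x * x) + 2 * (y * y)).
  { rewrite <- Hax. pose proof (Rle_0_sqr (Rabs x - y)). unfold Rsqr in *. lra. }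
  assert (c * (y * y) <= y / 8).
  { replace (y / 8) with (8 * c * (1 / (8 * c)) * y / 8) by (field; lra).
    assert (y * y <= (1 / (8 * c)) * y) by nra. nra. }
  nra.
Qed.

(* Above the parabola [y > M x^2] near the origin, [t] can be taken proportional to [|x| + y]
   with a factor large enough for the last condition and yet [K t^2 < y/2]. *)
Lemma parabola_pencil_parameter (l0 m k G X Y : R) : 0 < l0 -> 0 <= G -> 0 < Y ->
  exists M eps, 0 < eps /\ forall x y, x * x + y * y <= eps * eps -> M * (x * x) < y ->
    exists t, 0 < y <= Y /\ 0 < t <= 1 /\ t * (Rabs m + 1) <= l0 / 2 /\
      (Rabs k + 1) * (t * t) < y / 2 /\
      (4 * (Rabs X + (l0 + Rabs m)) / Y + 2) * (Rabs x + y) <= l0 / (2 * (1 + G)) * t.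
Proof.
  intros Hl0 HG HY.
  pose proof (Rabs_pos m). pose proof (Rabs_pos k). pose proof (Rabs_pos X).
  set (L0 := l0 / (2 * (1 + G))). set (t0 := Rmin 1 (l0 / (2 * (Rabs m + 1)))).
  set (C := (4 * (Rabs X + (l0 + Rabs m)) / Y + 2) / L0). set (KC := (Rabs k + 1) * (C * C)).
  assert (HL0 : 0 < L0) by (unfold L0; apply Rdiv_lt_0_compat; lra).
  assert (HC : 0 < C).
  { apply Rdiv_lt_0_compat; [| exact HL0].
    assert (0 < 4 * (Rabs X + (l0 + Rabs m)) / Y) by (apply Rdiv_lt_0_compat; lra). lra. }
  assert (HKC : 0 < KC) by (apply Rmult_lt_0_compat; nra).
  assert (Ht0 : 0 < t0) by (apply Rmin_glb_lt; [lra | apply Rdiv_lt_0_compat; lra]).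
  assert (t0 <= 1) by (unfold t0; apply Rmin_l).
  assert (t0 <= l0 / (2 * (Rabs m + 1))) by (unfold t0; apply Rmin_r).
  set (eps := Rmin (Rmin 1 (t0 / (2 * C))) (Rmin (1 / (8 * KC)) Y)).
  assert (He2 : eps <= t0 / (2 * C))
    by (unfold eps; eapply Rle_trans; [apply Rmin_l | apply Rmin_r]).
  assert (He3 : eps <= 1 / (8 * KC))
    by (unfold eps; eapply Rle_trans; [apply Rmin_r | apply Rmin_l]).
  assert (He4 : eps <= Y) by (unfold eps; eapply Rle_trans; apply Rmin_r).
  assert (Heps : 0 < eps).
  { unfold eps. repeat apply Rmin_glb_lt; try lra; apply Rdiv_lt_0_compat; lra. }
  exists (8 * KC), eps. split; [exact Heps |]. intros x y Hxy HM.
  assert (Hy : 0 < y) by nra.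
  assert (Hyeps : y <= eps) by nra.
  assert (Hax : Rabs x * Rabs x = x * x) by (rewrite <- Rabs_mult, Rabs_pos_eq; nra).
  assert (Hxeps : Rabs x <= eps) by (pose proof (Rabs_pos x); nra).
  exists (C * (Rabs x + y)).
  assert (Ht : C * (Rabs x + y) <= t0).
  { replace t0 with (C * (2 * (t0 / (2 * C)))) by (field; lra). apply Rmult_le_compat_l; lra. }
  split; [lra | split; [split; [pose proof (Rabs_pos x); nra | lra] | split; [| split]]].
  - replace (l0 / 2) with (l0 / (2 * (Rabs m + 1)) * (Rabs m + 1)) by (field; lra).
    apply Rmult_le_compat_r; lra.
  - replace ((Rabs k + 1) * (C * (Rabs x + y) * (C * (Rabs x + y)))) with
      (KC * ((Rabs x + y) * (Rabs x + y))) by (unfold KC; ring).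
    apply parabola_sq_bound; lra.
  - right. unfold C. field. lra.
Qed.

Lemma convex2_nbhs_above_parabola (S : R -> R -> Prop) (l0 m k G X Y : R) :
  convex2 S -> 0 < l0 -> 0 <= G -> 0 < Y ->
  (forall t, S (pencil l0 m G t) (pencil 0 k G t)) -> S X Y ->
  exists M eps, 0 < eps /\ forall x y, x * x + y * y <= eps * eps -> M * (x * x) < y ->
    exists r, 0 < r /\ forall x' y', (x' - x) * (x' - x) + (y' - y) * (y' - y) < r * r ->
      S x' y'.
Proof.
  intros conv Hl0 HG HY Hcurve SXY.
  destruct (parabola_pencil_parameter l0 m k G X Y Hl0 HG HY) as [M [eps [Heps Hpar]]].
  exists M, eps. split; [exact Heps |]. intros x y Hxy HM.
  destruct (Hpar x y Hxy HM) as [t [Hy [Ht [Htm [HKt Hside]]]]].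
  destruct (pencil_triangle_orient_pos l0 m k G X Y t x y Hl0 HG Hy Ht Htm HKt Hside)
    as [Ob [Oc Oa]].
  pose proof (Hcurve (- t)) as Sc. rewrite (pencil_opp 0), Ropp_0 in Sc.
  exact (convex2_triangle_nbhs S _ _ X Y _ _ x y conv (Hcurve t) SXY Sc Ob Oc Oa).
Qed.

Lemma pencil_nonneg_coeff_eq0 (a b G : R) : 0 <= G -> (forall t, 0 <= pencil a b G t) -> a = 0.
Proof.
  intros HG Ht. destruct (Req_dec a 0) as [| Ha]; auto. exfalso.
  set (K := Rabs b + 1). assert (HK : 0 < K) by (unfold K; pose proof (Rabs_pos b); lra).
  (* at [t = - a / (2 K)] the linear term beats the quadratic one *)
  set (t := - a / (2 * K)). specialize (Ht t). unfold pencil in Ht.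
  assert (HD : 0 < 1 + t * t * G) by nra.
  assert (H1 : 0 <= t * a + t * t * b).
  { replace (t * a + t * t * b) with ((t * a + t * t * b) / (1 + t * t * G) * (1 + t * t * G))
      by (field; lra). nra. }
  assert (H2 : t * t * b <= t * t * K).
  { apply Rmult_le_compat_l; [nra |]. unfold K. pose proof (Rle_abs b). lra. }
  assert (H3 : t * a = -2 * (a * a / (4 * K))) by (unfold t; field; lra).
  assert (H4 : t * t * K = a * a / (4 * K)) by (unfold t; field; lra).
  assert (0 < a * a / (4 * K)) by (apply Rdiv_lt_0_compat; nra).
  lra.
Qed.

(** * Coordinates attached to a boundary point *)

Definition frame (Om : Cx -> Prop) (l u : Cx) (xi eta : R) : Prop :=
  Om (Cadd l (Cmul (mkC eta xi) u)).

Lemma frame_coords (l u w : Cx) : Re u * Re u + Im u * Im u = 1 ->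
  Cadd l (Cmul (mkC (eta_c l u w) (xi_c l u w)) u) = w.
Proof.
  intro Hu. unfold eta_c, xi_c. apply Cx_ext; simpl.
  - transitivity (Re w + (Re w - Re l) * (Re u * Re u + Im u * Im u - 1));
      [ring | rewrite Hu; ring].
  - transitivity (Im w + (Im w - Im l) * (Re u * Re u + Im u * Im u - 1));
      [ring | rewrite Hu; ring].
Qed.

Lemma eta_c_frame (l u : Cx) (xi eta : R) : Re u * Re u + Im u * Im u = 1 ->
  eta_c l u (Cadd l (Cmul (mkC eta xi) u)) = eta.
Proof.
  intro Hu. unfold eta_c. simpl.
  transitivity (eta * (Re u * Re u + Im u * Im u)); [ring | rewrite Hu; ring].
Qed.

Lemma eta_c_nonneg (Om : Cx -> Prop) (l u z : Cx) : eta_direction Om l u -> Om z ->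
  0 <= eta_c l u z.
Proof.
  intros [_ [Hcor Hncor]] Hz. destruct (classic (corner_point Om l)) as [Hc | Hc].
  - destruct (Hcor Hc) as [th [[Hth0 Hth1] [Hsec _]]]. specialize (Hsec z Hz).
    unfold sector in Hsec. unfold eta_c.
    assert (0 <= cos th) by (apply cos_ge_0; pose proof PI_RGT_0; lra).
    assert (0 <= Cabs (Csub z l)) by apply sqrt_pos. nra.
  - now apply (Hncor Hc).
Qed.

Lemma Cinterior_mem (S : Cx -> Prop) (z : Cx) : Cinterior S z -> S z.
Proof. intros [e [He Hball]]. apply Hball, Cabs_lt; simpl; nra. Qed.

Lemma eta_c_interior_pos (Om : Cx -> Prop) (l u z0 : Cx) : Cabs u = 1 ->
  (forall z, Om z -> 0 <= eta_c l u z) -> Cinterior Om z0 -> 0 < eta_c l u z0.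
Proof.
  intros Hu Heta [e [He Hball]]. apply Cabs_eq1 in Hu.
  set (z := Csub z0 (Cmul (mkC (e / 2) 0) u)).
  assert (Hz : Om z).
  { apply Hball, Cabs_lt; [lra |]. unfold z. simpl.
    replace (_ + _) with (e / 2 * (e / 2) * (Re u * Re u + Im u * Im u)) by ring. nra. }
  assert (E : eta_c l u z = eta_c l u z0 - e / 2 * (Re u * Re u + Im u * Im u))
    by (unfold z, eta_c; simpl; ring).
  rewrite Hu in E. apply Heta in Hz. lra.
Qed.

Lemma upper_curvature_finite (Om : Cx -> Prop) (l u : Cx) : Cabs u = 1 ->
  (exists M eps, 0 < eps /\ forall x y, x * x + y * y <= eps * eps -> M * (x * x) < y ->
     exists r, 0 < r /\ forall x' y', (x' - x) * (x' - x) + (y' - y) * (y' - y) < r * r ->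
       frame Om l u x' y') ->
  ~ (gamma_u_plus_infinite (Ccl Om) l u \/ gamma_u_minus_infinite (Ccl Om) l u).
Proof.
  intros Hu [M [eps [Heps Hnbhs]]]. apply Cabs_eq1 in Hu.
  assert (Fin : forall w, Cboundary (Ccl Om) w -> xi_c l u w <> 0 ->
    (xi_c l u w) ^ 2 + (eta_c l u w) ^ 2 <= eps ^ 2 -> M < eta_c l u w / (xi_c l u w) ^ 2 -> False).
  { intros w [_ Hnint] Hx0 Hxy HM. set (x := xi_c l u w) in *. set (y := eta_c l u w) in *.
    assert (Hxx : 0 < x * x) by (destruct (Rlt_or_le x 0); nra).
    destruct (Hnbhs x y) as [r [Hr Hball]].
    - simpl in Hxy. lra.
    - replace (x ^ 2) with (x * x) in HM by ring.
      apply Rmult_lt_compat_r with (r := x * x) in HM; [| exact Hxx].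
      unfold Rdiv in HM. rewrite Rmult_assoc, Rinv_l in HM by lra. lra.
    - apply Hnint. exists r. split; [exact Hr |]. intros w' Hw'. apply Ccl_of.
      rewrite <- (frame_coords l u w' Hu). apply Hball.
      apply Cabs_lt_inv in Hw'.
      replace (_ + _) with ((Re (Csub w' w) * Re (Csub w' w) + Im (Csub w' w) * Im (Csub w' w))
        * (Re u * Re u + Im u * Im u)) by (unfold x, y, xi_c, eta_c; simpl; ring).
      rewrite Hu. lra. }
  intros [Hp | Hp]; destruct (Hp M eps Heps) as [w [Hb [Hx [Hxy HM]]]];
    apply (Fin w); auto; lra.
Qed.

Lemma frame_shift (Om : Cx -> Prop) (l u v : Cx) : Re u * Re u + Im u * Im u = 1 ->
  Om (Cadd l v) -> frame Om l u (Im (Cmul v (Cconj u))) (Re (Cmul v (Cconj u))).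
Proof.
  intros Hu Hv. unfold frame. replace (Cadd l _) with (Cadd l v); [exact Hv |].
  apply Cx_ext; simpl.
  - transitivity (Re l + Re v * (Re u * Re u + Im u * Im u)); [rewrite Hu; ring | ring].
  - transitivity (Im l + Im v * (Re u * Re u + Im u * Im u)); [rewrite Hu; ring | ring].
Qed.

(** * The numerical range *)

Section Operator.
Variable H : CHilbert.
Variable D : H -> Prop.
Variable A : H -> H.
Hypothesis HS : is_subspace D.
Hypothesis HL : linear_on D A.

Lemma D_comb (a b : Cx) (x y : H) : D x -> D y -> D (hadd (hscal a x) (hscal b y)).
Proof. destruct HS as [_ [Ha Hs]]. intros; apply Ha; apply Hs; auto. Qed.

Lemma A_comb (a b : Cx) (x y : H) : D x -> D y ->
  A (hadd (hscal a x) (hscal b y)) = hadd (hscal a (A x)) (hscal b (A y)).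
Proof.
  destruct HS as [_ [Ha Hs]], HL as [La Ls]. intros.
  rewrite La by (apply Hs; auto). now rewrite !Ls.
Qed.

Lemma A_zero : A hzero = hzero.
Proof.
  destruct HS as [D0 _], HL as [La _]. apply (hadd_idem H).
  now rewrite <- La, hadd0.
Qed.

Lemma Num_of_nonzero (h : H) : D h -> h <> hzero ->
  Num D A (Cmul (mkC (/ Re (hinner h h)) 0) (hinner (A h) h)).
Proof.
  intros Dh Hh. pose proof (inner_self_gt0 H h Hh) as Hp. pose proof (inner_self_real H h) as Hi.
  set (r := Re (hinner h h)) in *.
  assert (Hsp : 0 < sqrt r) by (apply sqrt_lt_R0; lra).
  assert (Hsq : / r = / sqrt r * / sqrt r) by (rewrite <- Rinv_mult, sqrt_sqrt; lra).
  destruct HS as [_ [_ Hs]], HL as [_ Ls].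
  exists (hscal (mkC (/ sqrt r) 0) h). split; [auto|split].
  - unfold hnorm. rewrite hinnerZl, innerZr. simpl. fold r. rewrite Hi.
    match goal with |- sqrt ?e = 1 => replace e with (r * / r) by (rewrite Hsq; ring) end.
    now rewrite Rinv_r, sqrt_1 by lra.
  - rewrite Ls, hinnerZl, innerZr, Hsq by auto. Cx_ring.
Qed.

(* Pairing the vanishing combination with [h1], [h2], [A h2], and applying [A] to it,
   gives four linear relations which force [<A h1, h1> = <A h2, h2>]. *)
Lemma Num_value_eq_of_dependent (a : R) (b : Cx) (h1 h2 : H) :
  D h1 -> D h2 -> hinner h1 h1 = C1 -> hinner h2 h2 = C1 -> a <> 0 ->
  hadd (hscal (mkC a 0) h1) (hscal b h2) = hzero -> hinner (A h1) h1 = hinner (A h2) h2.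
Proof.
  intros D1 D2 U1 U2 Ha Z.
  assert (E1 := f_equal (fun v => hinner v h1) Z).
  assert (E2 := f_equal (fun v => hinner v h2) Z).
  assert (E3 := f_equal (fun v => hinner (A v) h1) Z).
  assert (E4 := f_equal (fun v => hinner v (A h2)) Z).
  simpl in E1, E2, E3, E4.
  rewrite A_comb, A_zero in E3 by auto.
  rewrite hinnerDl, !hinnerZl, inner0l in E1, E2, E3, E4.
  rewrite U1, (hinner_conj H h1 h2) in E1. rewrite U2 in E2.
  rewrite (hinner_conj H (A h2) h1), (hinner_conj H (A h2) h2) in E4.
  destruct b as [b1 b2], (hinner h1 h2) as [e1 e2], (hinner (A h2) h1) as [k1 k2],
    (hinner (A h1) h1) as [p1 p2], (hinner (A h2) h2) as [q1 q2].
  injection E1; injection E2; injection E3; injection E4; simpl; intros.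
  assert (B1 : b1 = - a * e1) by lra. assert (B2 : b2 = - a * e2) by lra. subst b1 b2.
  assert (N : e1 * e1 + e2 * e2 = 1) by (apply (Rmult_eq_reg_l a); [nra | auto]).
  assert (K1 : k1 = e1 * q1 + e2 * q2) by (apply (Rmult_eq_reg_l a); [nra | auto]).
  assert (K2 : k2 = e1 * q2 - e2 * q1) by (apply (Rmult_eq_reg_l a); [nra | auto]).
  assert (P1 : p1 = e1 * k1 - e2 * k2) by (apply (Rmult_eq_reg_l a); [nra | auto]).
  assert (P2 : p2 = e1 * k2 + e2 * k1) by (apply (Rmult_eq_reg_l a); [nra | auto]).
  apply Cx_ext; simpl; rewrite ?P1, ?P2, K1, K2.
  - transitivity ((e1 * e1 + e2 * e2) * q1); [ring | rewrite N; ring].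
  - transitivity ((e1 * e1 + e2 * e2) * q2); [ring | rewrite N; ring].
Qed.


Lemma Num_of_line_relation (h : H) (z1 c : Cx) (s : R) : D h -> h <> hzero -> c <> C0 ->
  Cmul (Csub (hinner (A h) h) (Cmul z1 (hinner h h))) (Cconj c) =
    mkC (s * Re (hinner h h) * (Re c * Re c + Im c * Im c)) 0 ->
  Num D A (Cadd z1 (Cmul (mkC s 0) c)).
Proof.
  intros Dh Hh Hc E. pose proof (Num_of_nonzero h Dh Hh) as Nh.
  pose proof (inner_self_gt0 H h Hh) as Hn.
  assert (Ehh : hinner h h = mkC (Re (hinner h h)) 0)
    by (apply Cx_ext; [reflexivity | apply inner_self_real]).
  set (n := Re (hinner h h)) in *. rewrite Ehh in E.
  apply Cmul_conj_eq_real in E; [| exact Hc].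
  replace (Cadd z1 (Cmul (mkC s 0) c)) with (Cmul (mkC (/ n) 0) (hinner (A h) h)); [exact Nh |].
  pose proof (f_equal Re E) as Er. pose proof (f_equal Im E) as Ei. simpl in Er, Ei.
  apply Cx_ext; simpl.
  - replace (Re (hinner (A h) h)) with (n * (Re z1 + s * Re c)) by lra. field. lra.
  - replace (Im (hinner (A h) h)) with (n * (Im z1 + s * Im c)) by lra. field. lra.
Qed.

(* Toeplitz-Hausdorff: along [h_x = (1-x) h1 + x w h2], the phase of [w] is chosen so that the
   normalized value of [h_x] stays on the line through [z1] and [z2]; the intermediate value
   theorem then finds the point [z1 + s (z2 - z1)]. *)
Lemma Num_segment_open (z1 z2 : Cx) (s : R) : Num D A z1 -> Num D A z2 -> z1 <> z2 ->
  0 < s < 1 -> Num D A (Cadd z1 (Cmul (mkC s 0) (Csub z2 z1))).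
Proof.
  intros [h1 [D1 [U1 Q1]]] [h2 [D2 [U2 Q2]]] Hz Hs.
  apply inner_self_unit in U1, U2.
  set (c := Csub z2 z1).
  assert (Hc : c <> C0).
  { intro E. apply Hz. pose proof (f_equal Re E). pose proof (f_equal Im E).
    unfold c in *; simpl in *. apply Cx_ext; lra. }
  pose proof (Cnorm2_gt0 c Hc) as Hcc. set (cc := Re c * Re c + Im c * Im c) in *.
  set (e := hinner h1 h2).
  set (P := Cmul (Csub (hinner (A h1) h2) (Cmul z1 e)) (Cconj c)).
  set (R := Cmul (Csub (hinner (A h2) h1) (Cmul z1 (Cconj e))) (Cconj c)).
  destruct (exists_real_phase (Csub P (Cconj R))) as [w [Hw0 Hw]].
  pose proof (Cnorm2_gt0 w Hw0) as Hww. set (ww := Re w * Re w + Im w * Im w) in *.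
  set (hx := fun x => hadd (hscal (mkC (1 - x) 0) h1) (hscal (Cmul (mkC x 0) w) h2)).
  set (sg := Re (Cmul (Cconj w) e)).
  set (rh := Re (Cadd (Cmul (Cconj w) P) (Cmul w R))).
  assert (HN : forall x, Re (hinner (hx x) (hx x)) =
    (1 - x) * (1 - x) + 2 * x * (1 - x) * sg + x * x * ww).
  { intro x. unfold hx. rewrite inner_comb, U1, U2, (hinner_conj H h1 h2). fold e.
    unfold sg, ww. simpl. ring. }
  assert (HW : forall x, Cmul (Csub (hinner (A (hx x)) (hx x)) (Cmul z1 (hinner (hx x) (hx x))))
    (Cconj c) = mkC (x * (1 - x) * rh + x * x * ww * cc) 0).
  { intro x. unfold hx. rewrite A_comb, !inner_comb, Q1, Q2, U1, U2, (hinner_conj H h1 h2)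
      by auto. fold e. apply Cx_ext.
    - unfold rh, P, R, ww, cc, c. simpl. ring.
    - transitivity (x * (1 - x) * Im (Cmul (Cconj w) (Csub P (Cconj R)))).
      + unfold P, R, c. simpl. ring.
      + rewrite Hw. simpl. ring. }
  set (phi := fun x => x * (1 - x) * rh + x * x * ww * cc
                       - s * cc * ((1 - x) * (1 - x) + 2 * x * (1 - x) * sg + x * x * ww)).
  destruct (IVT_interior phi) as [x [Hx Hphi]].
  - apply derivable_continuous. unfold phi. reg.
  - unfold phi. replace (_ - _) with (- (s * cc)) by ring.
    assert (0 < s * cc) by (apply Rmult_lt_0_compat; lra). lra.
  - unfold phi. replace (_ - _) with ((1 - s) * (ww * cc)) by ring.
    apply Rmult_lt_0_compat; [lra | nra].
  - assert (Hhx : hx x <> hzero).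
    { intro Z. apply Hz. rewrite <- Q1, <- Q2.
      apply (Num_value_eq_of_dependent (1 - x) (Cmul (mkC x 0) w)); auto; lra. }
    apply (Num_of_line_relation (hx x)); [apply D_comb; auto | exact Hhx | exact Hc |].
    rewrite HW, HN. f_equal. unfold phi in Hphi. fold cc. lra.
Qed.

Lemma Num_segment (z1 z2 : Cx) (s : R) : Num D A z1 -> Num D A z2 -> 0 <= s <= 1 ->
  Num D A (Cadd z1 (Cmul (mkC s 0) (Csub z2 z1))).
Proof.
  intros N1 N2 Hs.
  destruct (Req_dec s 0) as [-> | Hs0].
  { now replace (Cadd z1 (Cmul (mkC 0 0) (Csub z2 z1))) with z1 by Cx_ring. }
  destruct (Req_dec s 1) as [-> | Hs1].
  { now replace (Cadd z1 (Cmul (mkC 1 0) (Csub z2 z1))) with z2 by Cx_ring. }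
  destruct (classic (z1 = z2)) as [<- | Hz].
  - now replace (Cadd z1 (Cmul (mkC s 0) (Csub z1 z1))) with z1 by Cx_ring.
  - apply Num_segment_open; auto; lra.
Qed.

Lemma Num_frame_convex (l u : Cx) : convex2 (frame (Num D A) l u).
Proof.
  intros x1 y1 x2 y2 s S1 S2 Hs. unfold frame in *.
  replace (Cadd l (Cmul (mkC (y1 + s * (y2 - y1)) (x1 + s * (x2 - x1))) u)) with
    (Cadd (Cadd l (Cmul (mkC y1 x1) u)) (Cmul (mkC s 0)
      (Csub (Cadd l (Cmul (mkC y2 x2) u)) (Cadd l (Cmul (mkC y1 x1) u))))) by Cx_ring.
  now apply Num_segment.
Qed.

Section Pencil.
Variables f0 g : H.
Hypothesis Df0 : D f0.
Hypothesis Dg : D g.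
Hypothesis Uf0 : hinner f0 f0 = C1.
Hypothesis Hgf0 : hinner g f0 = C0.

Let l := hinner (A f0) f0.
Let G := Re (hinner g g).
Let cross (sg : Cx) := Cadd (Cmul (Cconj sg) (hinner (A f0) g)) (Cmul sg (hinner (A g) f0)).
Let quad := Csub (hinner (A g) g) (Cmul l (mkC G 0)).

Lemma Num_pencil (tau : Cx) :
  Num D A (Cadd l (Cmul (mkC (/ (1 + (Re tau * Re tau + Im tau * Im tau) * G)) 0)
    (Cadd (cross tau) (Cmul (Cmul tau (Cconj tau)) quad)))).
Proof.
  set (h := hadd (hscal C1 f0) (hscal tau g)).
  assert (HG : 0 <= G) by apply hinner_pos.
  assert (Hpos : 0 < 1 + (Re tau * Re tau + Im tau * Im tau) * G) by nra.
  assert (Hfg : hinner f0 g = C0) by (rewrite (hinner_conj H g f0), Hgf0; Cx_ring).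
  assert (Hhh : hinner h h = mkC (1 + (Re tau * Re tau + Im tau * Im tau) * G) 0).
  { unfold h. rewrite inner_comb, Uf0, Hfg, Hgf0. pose proof (inner_self_real H g) as Hg.
    apply Cx_ext; simpl; fold G; [ring | rewrite Hg; ring]. }
  assert (Hh0 : h <> hzero).
  { intro Z. rewrite Z, inner0l in Hhh. injection Hhh. lra. }
  pose proof (Num_of_nonzero h (D_comb _ _ _ _ Df0 Dg) Hh0) as Nh.
  rewrite Hhh in Nh. simpl Re in Nh.
  replace (Cadd l _) with (Cmul (mkC (/ (1 + (Re tau * Re tau + Im tau * Im tau) * G)) 0)
    (hinner (A h) h)); [exact Nh |].
  unfold h. rewrite A_comb, inner_comb by auto. fold l. unfold cross, quad.
  apply Cx_ext; simpl; field; lra.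
Qed.

Lemma Num_frame_pencil (u sg : Cx) (t : R) :
  Re u * Re u + Im u * Im u = 1 -> Re sg * Re sg + Im sg * Im sg = 1 ->
  frame (Num D A) l u
    (pencil (Im (Cmul (cross sg) (Cconj u))) (Im (Cmul quad (Cconj u))) G t)
    (pencil (Re (Cmul (cross sg) (Cconj u))) (Re (Cmul quad (Cconj u))) G t).
Proof.
  intros Hu Hsg. pose proof (Num_pencil (Cmul (mkC t 0) sg)) as N.
  set (tau := Cmul (mkC t 0) sg) in N.
  assert (Hn : Re tau * Re tau + Im tau * Im tau = t * t).
  { unfold tau. simpl. transitivity (t * t * (Re sg * Re sg + Im sg * Im sg)); [ring |].
    rewrite Hsg. ring. }
  assert (Htt : Cmul tau (Cconj tau) = mkC (t * t) 0).
  { rewrite <- Hn. Cx_ring. }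
  assert (Hcross : cross tau = Cmul (mkC t 0) (cross sg)) by (unfold cross, tau; Cx_ring).
  rewrite Hn, Htt, Hcross in N.
  apply (frame_shift _ _ _ _ Hu) in N.
  assert (HG : 0 <= G) by apply hinner_pos.
  assert (Hpos : 0 < 1 + t * t * G) by nra.
  replace (pencil (Im _) _ G t) with (Im (Cmul (Cmul (mkC (/ (1 + t * t * G)) 0)
    (Cadd (Cmul (mkC t 0) (cross sg)) (Cmul (mkC (t * t) 0) quad))) (Cconj u)))
    by (unfold pencil; simpl; field; lra).
  replace (pencil (Re _) _ G t) with (Re (Cmul (Cmul (mkC (/ (1 + t * t * G)) 0)
    (Cadd (Cmul (mkC t 0) (cross sg)) (Cmul (mkC (t * t) 0) quad))) (Cconj u)))
    by (unfold pencil; simpl; field; lra).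
  exact N.
Qed.

Lemma Num_frame_parabola (u : Cx) : Cabs u = 1 -> (forall z, Num D A z -> 0 <= eta_c l u z) ->
  hinner (A f0) g <> C0 ->
  exists l0 m k, 0 < l0 /\ forall t, frame (Num D A) l u (pencil l0 m G t) (pencil 0 k G t).
Proof.
  intros Hu Heta Ha. apply Cabs_eq1 in Hu.
  assert (HG : 0 <= G) by apply hinner_pos.
  set (w1 := fun sg => Cmul (cross sg) (Cconj u)).
  assert (Re0 : forall sg, Re sg * Re sg + Im sg * Im sg = 1 -> Re (w1 sg) = 0).
  { intros sg Hsg. apply (pencil_nonneg_coeff_eq0 _ (Re (Cmul quad (Cconj u))) G HG). intro t.
    pose proof (Num_frame_pencil u sg t Hu Hsg) as F. apply Heta in F.
    now rewrite eta_c_frame in F. }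
  assert (Hex : exists sg, Re sg * Re sg + Im sg * Im sg = 1 /\ Im (w1 sg) <> 0).
  { apply NNPP. intro Hn.
    assert (Z : forall sg, Re sg * Re sg + Im sg * Im sg = 1 -> cross sg = C0).
    { intros sg Hsg. rewrite <- (Cmul_conj_unit (cross sg) u Hu). fold (w1 sg).
      replace (w1 sg) with C0; [Cx_ring |].
      apply Cx_ext; [rewrite Re0 by auto; reflexivity |].
      apply NNPP. intro Hi. apply Hn. now exists sg. }
    pose proof (Z C1 ltac:(simpl; ring)) as Z1. pose proof (Z (mkC 0 1) ltac:(simpl; ring)) as Zi.
    unfold cross in Z1, Zi. apply Ha. destruct (hinner (A f0) g), (hinner (A g) f0).
    injection Z1; injection Zi; simpl; intros. apply Cx_ext; simpl; lra. }
  destruct Hex as [sg [Hsg Hl]].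
  pose proof (Num_frame_pencil u sg) as F. change (Cmul (cross sg) (Cconj u)) with (w1 sg) in F.
  rewrite (Re0 sg Hsg) in F.
  destruct (Rlt_or_le 0 (Im (w1 sg))) as [Hp | Hnp].
  - exists (Im (w1 sg)), (Im (Cmul quad (Cconj u))), (Re (Cmul quad (Cconj u))).
    split; [exact Hp |]. intro t. now apply F.
  - exists (- Im (w1 sg)), (Im (Cmul quad (Cconj u))), (Re (Cmul quad (Cconj u))).
    split; [lra |]. intro t. specialize (F (- t) Hu Hsg).
    rewrite !pencil_opp, Ropp_0 in F. exact F.
Qed.

End Pencil.

Lemma exists_orthogonal_cross (f0 : H) : hdense D -> D f0 -> hinner f0 f0 = C1 ->
  A f0 <> hscal (hinner (A f0) f0) f0 ->
  exists g, D g /\ hinner g f0 = C0 /\ hinner (A f0) g <> C0.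
Proof.
  intros Hdense Df0 Uf0 Hne.
  set (l := hinner (A f0) f0) in *.
  set (v := hadd (A f0) (hopp (hscal l f0))).
  assert (Hv : v <> hzero) by (intro E; apply Hne, (hsub_eq0 H), E).
  assert (Hvy : forall y, hinner v y = Cadd (hinner (A f0) y) (Copp (Cmul l (hinner f0 y))))
    by (intro y; unfold v; now rewrite hinnerDl, innerNl, hinnerZl).
  destruct (dense_not_orthogonal H D v Hdense Hv) as [y [Dy Hy]].
  destruct HS as [_ [Ha Hs]].
  exists (hadd y (hscal (Copp (hinner y f0)) f0)). split; [| split].
  - apply Ha; auto.
  - rewrite hinnerDl, hinnerZl, Uf0. Cx_ring.
  - intro Z. apply Hy. rewrite Hvy, <- Z, innerDr, innerZr, (hinner_conj H f0 y). fold l.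
    Cx_ring.
Qed.

End Operator.

Theorem mainTheorem2 (H : CHilbert) (D : H -> Prop) (A : H -> H) (l : Cx) :
  densely_defined_closed_operator D A ->
  (exists z : Cx, Cinterior (Num D A) z) ->
  (exists z : Cx, ~ Num D A z) ->
  Cboundary (Num D A) l ->
  infinite_upper_curvature (Ccl (Num D A)) l ->
  Num D A l ->
  eigenvalue D A l.
Proof.
  intros [HS [HL [Hdense _]]] [z0 Hz0] _ _ [u [Hdir Hinf]] [f0 [Df0 [Uf0 <-]]].
  apply inner_self_unit in Uf0. apply NNPP. intro Hne.
  destruct (exists_orthogonal_cross H D A HS f0 Hdense Df0 Uf0) as [g [Dg [Hgf0 Ha]]].
  { intro E. apply Hne. exists f0. split; [| split]; auto.
    intro Z. rewrite Z, inner0l in Uf0. injection Uf0. intros. lra. }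
  set (l := hinner (A f0) f0) in *.
  assert (Hu : Cabs u = 1) by apply (proj1 Hdir).
  assert (Heta : forall z, Num D A z -> 0 <= eta_c l u z)
    by (intros z Hz; apply (eta_c_nonneg _ _ _ _ Hdir), Ccl_of, Hz).
  destruct (Num_frame_parabola H D A HS HL f0 g Df0 Dg Uf0 Hgf0 u Hu Heta Ha)
    as [l0 [m [k [Hl0 Hcurve]]]]. fold l in Hcurve.
  apply (upper_curvature_finite (Num D A) l u Hu); [| exact Hinf].
  apply (convex2_nbhs_above_parabola _ l0 m k (Re (hinner g g)) (xi_c l u z0) (eta_c l u z0)).
  - apply Num_frame_convex; auto.
  - exact Hl0.
  - apply hinner_pos.
  - exact (eta_c_interior_pos _ _ _ _ Hu Heta Hz0).
  - exact Hcurve.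
  - unfold frame. rewrite frame_coords by now apply Cabs_eq1. now apply Cinterior_mem.
Qed.
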